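(* For any $D\subset S$ and $A\subset\Omega$: (a) if $\phi\in F^D_A$, then $\phi_\pi\in F^D_A$; (b) $\overline{F^D_A}\cap\mathcal H_\pi=\overline{F^D_A\cap\mathcal H_\pi}$.
   Context: Let $\mathcal H$ be a complex Hilbert space; $\overline V$ is the closure of $V$. A projection is a bounded self-adjoint idempotent operator; $\wedge_\alpha p_\alpha$ is the projection onto the intersection of ranges. Let $S$ be a set; for each $t\in S$ let $\Gamma(t)$ be a countable set and for $a\in\Gamma(t)$ let $p^t_a$ be a projection on $\mathcal H$ with $\sum_{a\in\Gamma(t)}p^t_a=I$ (strong convergence). Let $\pi=\{p^t_a\}$ and $p^{t_1,\dots,t_k}_{a_1,\dots,a_k}=\wedge_{i=1}^kp^{t_i}_{a_i}$. $\pi$ commutes on $\phi$ if $W\phi=V\phi$ whenever $W,V$ are finite products of elements of $\pi$ with the same factors (with multiplicity) in possibly different orders; $\mathcal H_\pi$ is the closed subspace of such $\phi$, $p_\pi$ its projection, $\phi_\pi=p_\pi\phi$. Let $\Omega=\prod_{t\in S}\Gamma(t)$. For $A\subset\Omega$ and $D\subset S$, $F^D_A=\{\phi\in\mathcal H:$ for every $\omega\in A$ there are $t_1,\dots,t_k\in D$ with $p^{t_1,\dots,t_k}_{\omega_{t_1},\dots,\omega_{t_k}}\phi=0\}$. *)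

From HB Require Import structures.
From mathcomp Require Import all_boot all_order all_algebra.
From mathcomp Require Import complex.
From mathcomp Require Import reals.
From Stdlib Require List Permutation.
Set Implicit Arguments. Unset Strict Implicit. Unset Printing Implicit Defensive.
Import Order.TTheory GRing.Theory Num.Theory.
Local Open Scope ring_scope.

Section Hilbert.
Variables (R : realType) (H : lmodType R[i]) (inner : H -> H -> R[i]).

Definition dist2 (x y : H) : R[i] := inner (x - y) (x - y).

Definition is_hilbert : Prop :=
  [/\ (forall (a : R[i]) x y z, inner (a *: x + y) z = a * inner x z + inner y z),
      (forall x y, inner y x = (inner x y)^*),
      (forall x, 0 <= inner x x),
      (forall x, inner x x = 0 -> x = 0) &
      (forall u : nat -> H,
         (forall e : R[i], 0 < e -> exists N, forall m n, (N <= m)%N -> (N <= n)%N ->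
            dist2 (u m) (u n) < e) ->
         exists l, forall e : R[i], 0 < e -> exists N, forall n, (N <= n)%N ->
            dist2 (u n) l < e)].

Definition closureH (V : H -> Prop) : H -> Prop :=
  fun x => forall e : R[i], 0 < e -> exists v, V v /\ dist2 x v < e.

Definition is_projection (P : H -> H) : Prop :=
  [/\ (forall (a : R[i]) x y, P (a *: x + y) = a *: P x + P y),
      (exists M : R[i], forall x, inner (P x) (P x) <= M * inner x x),
      (forall x y, inner (P x) y = inner x (P y)) &
      (forall x, P (P x) = P x)].

Definition rangeH (P : H -> H) : H -> Prop := fun x => exists y, P y = x.

Definition proj_onto (P : H -> H) (M : H -> Prop) : Prop :=
  is_projection P /\ forall x, M x <-> rangeH P x.

Variables (S : Type) (Gamma : S -> countType) (p : forall t, Gamma t -> H -> H).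

(* for each t, the p^t_a (a in Gamma t) are projections with
   sum_a p^t_a = I (strong, unconditional convergence over the countable set) *)
Definition proj_family : Prop :=
  (forall t a, is_projection (@p t a)) /\
  (forall t (phi : H) (e : R[i]), 0 < e ->
     exists s0 : seq (Gamma t), forall s : seq (Gamma t), uniq s ->
        {subset s0 <= s} -> dist2 (\sum_(a <- s) @p t a phi) phi < e).

Definition prod_op (l : seq {t : S & Gamma t}) : H -> H :=
  foldr (fun i f => fun x => @p (projT1 i) (projT2 i) (f x)) id l.

Definition commutes_on (phi : H) : Prop :=
  forall l1 l2 : seq {t : S & Gamma t}, Permutation.Permutation l1 l2 ->
    prod_op l1 phi = prod_op l2 phi.

Definition H_pi : H -> Prop := fun phi => commutes_on phi.

Definition Omega := forall t : S, Gamma t.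

(* p^{t_1..t_k}_{a_1..a_k} = wedge_i p^{t_i}_{a_i}: projection onto the
   intersection of the ranges *)
Definition is_meet (ts : seq S) (om : Omega) (q : H -> H) : Prop :=
  proj_onto q (fun x => forall t, List.In t ts -> rangeH (@p t (om t)) x).

Definition F_DA (D : S -> Prop) (A : Omega -> Prop) : H -> Prop :=
  fun phi => forall om, A om ->
    exists ts : seq S, ts <> [::] /\ (forall t, List.In t ts -> D t) /\
      (forall q, is_meet ts om q -> q phi = 0).

End Hilbert.

(* The orthogonal projection p_pi onto H_pi commutes with every p^t_a:
   H_pi is invariant under each p^t_a, and a projection whose range is
   invariant under a self-adjoint operator commutes with it.  Hence p_pi maps
   the range of every meet q into itself, so it commutes with q as well and
   q (p_pi phi) = p_pi (q phi) = 0; this is (a).  For (b), p_pi is a contraction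
   fixing H_pi, so it moves approximants from F^D_A into F^D_A /\ H_pi, while
   H_pi, the range of a projection, is closed. *)
From HB Require Import structures.
From mathcomp Require Import all_boot all_order all_algebra.
From mathcomp Require Import complex.
From mathcomp Require Import reals.
From mathcomp Require Import ring.
From Stdlib Require Permutation.
Set Implicit Arguments. Unset Strict Implicit.
Import Order.TTheory GRing.Theory Num.Theory.
Local Open Scope ring_scope.

Section InnerProductSpace.
Variables (R : realType) (H : lmodType R[i]) (inner : H -> H -> R[i]).
Hypothesis hilbert : is_hilbert inner.

Lemma inner_subl x y z : inner (x - y) z = inner x z - inner y z.
Proof.
have [linl _ _ _ _] := hilbert.
by rewrite addrC -scaleN1r linl mulN1r addrC.
Qed.

Lemma inner_subr x y z : inner z (x - y) = inner z x - inner z y.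
Proof.
have [_ conj_sym _ _ _] := hilbert.
by rewrite [inner z x]conj_sym [inner z y]conj_sym conj_sym inner_subl rmorphB.
Qed.

Lemma inner_inj u v : (forall z, inner u z = inner v z) -> u = v.
Proof.
have [_ _ _ definite _] := hilbert => huv.
by apply/eqP; rewrite -subr_eq0; apply/eqP/definite; rewrite inner_subl huv subrr.
Qed.

Lemma inner_self_small_eq0 w : (forall e, 0 < e -> inner w w < e) -> w = 0.
Proof.
have [_ _ pos definite _] := hilbert => small; apply: definite.
have := pos w; rewrite le0r => /orP[/eqP // | w_gt0].
by have := small _ w_gt0; rewrite ltxx.
Qed.

Section Projection.
Variable P : H -> H.
Hypothesis P_proj : is_projection inner P.

Lemma proj_sub x y : P (x - y) = P x - P y.
Proof.
by have [lin _ _ _] := P_proj; rewrite addrC -scaleN1r lin scaleN1r addrC.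
Qed.

Lemma proj0 : P 0 = 0.
Proof. by have := proj_sub 0 0; rewrite !subrr. Qed.

Lemma inner_sub_proj z :
  inner (z - P z) (z - P z) = inner z z - inner (P z) (P z).
Proof.
have [_ _ adj idem] := P_proj.
rewrite inner_subl !inner_subr.
have -> : inner z (P z) = inner (P z) (P z) by rewrite adj idem.
have -> : inner (P z) z = inner (P z) (P z) by rewrite -{1}idem adj.
ring.
Qed.

Lemma inner_proj_le z : inner (P z) (P z) <= inner z z.
Proof.
have [_ _ pos _ _] := hilbert.
by have := pos (z - P z); rewrite inner_sub_proj subr_ge0.
Qed.

Lemma inner_sub_proj_le z : inner (z - P z) (z - P z) <= inner z z.
Proof.
have [_ _ pos _ _] := hilbert.
by rewrite inner_sub_proj lerBlDr lerDl pos.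
Qed.

(* P T = (T P)^* = (P T P)^* = P T P = T P *)
Lemma proj_comm_of_invariant (T : H -> H) :
  (forall x y, inner (T x) y = inner x (T y)) ->
  (forall x, P (T (P x)) = T (P x)) -> forall x, P (T x) = T (P x).
Proof.
have [_ _ adj _] := P_proj => T_adj inv x; apply: inner_inj => z.
by rewrite adj T_adj -inv -adj -T_adj -[in RHS]inv adj.
Qed.

End Projection.

Section ProjectionOnto.
Variables (P : H -> H) (M : H -> Prop).
Hypothesis onto : proj_onto inner P M.

Lemma proj_onto_fix x : M x -> P x = x.
Proof. by case: onto => [[_ _ _ idem] hM] /hM [y <-]; apply: idem. Qed.

Lemma proj_onto_in x : M (P x).
Proof. by case: onto => _ hM; apply/hM; exists x. Qed.

Lemma proj_onto_closed x : closureH inner M x -> M x.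
Proof.
have P_proj : is_projection inner P by case: onto.
move=> clx; suff -> : x = P x by apply: proj_onto_in.
apply/subr0_eq/inner_self_small_eq0 => e e_gt0.
have [y [My dxy]] := clx e e_gt0.
have -> : x - P x = (x - y) - P (x - y).
  by rewrite (proj_sub P_proj) (proj_onto_fix My) opprB addrA subrK.
exact: le_lt_trans (inner_sub_proj_le P_proj _) dxy.
Qed.

End ProjectionOnto.

End InnerProductSpace.

Section ProjectionFamily.
Variables (R : realType) (H : lmodType R[i]) (inner : H -> H -> R[i]).
Variables (S : Type) (Gamma : S -> countType) (p : forall t, Gamma t -> H -> H).
Variable p_pi : H -> H.
Hypotheses (hilbert : is_hilbert inner)
  (p_proj : forall t a, is_projection inner (@p t a))
  (p_pi_onto : proj_onto inner p_pi (H_pi p)).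

Let p_pi_proj : is_projection inner p_pi.
Proof. by case: p_pi_onto. Qed.

Lemma prod_op_cat l l' x : prod_op p (l ++ l') x = prod_op p l (prod_op p l' x).
Proof. by elim: l => //= i l ->. Qed.

Lemma H_pi_proj t (a : Gamma t) phi : H_pi p phi -> H_pi p (p a phi).
Proof.
move=> comm l1 l2 perm.
have := comm (l1 ++ [:: existT _ t a]) (l2 ++ [:: existT _ t a]).
by rewrite !prod_op_cat; apply; apply: Permutation.Permutation_app_tail.
Qed.

Lemma p_pi_comm t (a : Gamma t) x : p_pi (p a x) = p a (p_pi x).
Proof.
apply: (proj_comm_of_invariant hilbert p_pi_proj); first by case: (p_proj a).
move=> y; apply: (proj_onto_fix p_pi_onto); apply: H_pi_proj.
exact: proj_onto_in p_pi_onto y.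
Qed.

Lemma meet_comm_p_pi ts om q : is_meet inner p ts om q ->
  forall x, q (p_pi x) = p_pi (q x).
Proof.
move=> meet; have q_proj : is_projection inner q by case: meet.
apply: (proj_comm_of_invariant hilbert q_proj); first by case: p_pi_proj.
move=> x; apply: (proj_onto_fix meet) => t ts_t.
have [_ _ _ idem] := p_proj (om t).
have [y qx] := proj_onto_in meet x t ts_t.
by exists (p_pi (q x)); rewrite -p_pi_comm -qx idem.
Qed.

Variables (D : S -> Prop) (A : Omega Gamma -> Prop).

Lemma F_DA_p_pi phi : F_DA inner p D A phi -> F_DA inner p D A (p_pi phi).
Proof.
move=> F_phi om A_om; have [ts [ts_ne [tsD kill]]] := F_phi om A_om.
exists ts; split => //; split => // q meet.
by rewrite (meet_comm_p_pi meet) kill // (proj0 p_pi_proj).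
Qed.

Lemma closure_F_DA_H_pi x :
  closureH inner (F_DA inner p D A) x /\ H_pi p x <->
  closureH inner (fun y => F_DA inner p D A y /\ H_pi p y) x.
Proof.
split=> [[clx Hx] e e_gt0 | clx].
  have [v [F_v dxv]] := clx e e_gt0.
  exists (p_pi v); split.
    by split; [exact: F_DA_p_pi | exact: proj_onto_in p_pi_onto v].
  rewrite /dist2 -(proj_onto_fix p_pi_onto Hx) -(proj_sub p_pi_proj).
  exact: le_lt_trans (inner_proj_le hilbert p_pi_proj _) dxv.
split.
  by move=> e e_gt0; have [y [[F_y _] dxy]] := clx e e_gt0; exists y.
apply: (proj_onto_closed hilbert p_pi_onto) => e e_gt0.
by have [y [[_ Hy] dxy]] := clx e e_gt0; exists y.
Qed.

End ProjectionFamily.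

Theorem lemma9 (R : realType) (H : lmodType R[i]) (inner : H -> H -> R[i])
    (S : Type) (Gamma : S -> countType) (p : forall t, Gamma t -> H -> H)
    (p_pi : H -> H) (D : S -> Prop) (A : Omega Gamma -> Prop) :
  is_hilbert inner -> proj_family inner p ->
  proj_onto inner p_pi (H_pi p) ->
  (forall phi, F_DA inner p D A phi -> F_DA inner p D A (p_pi phi)) /\
  (forall x, (closureH inner (F_DA inner p D A) x /\ H_pi p x) <->
             closureH inner (fun y => F_DA inner p D A y /\ H_pi p y) x).
Proof.
move=> hilbert [p_proj _] p_pi_onto; split.
  exact: (F_DA_p_pi hilbert p_proj p_pi_onto).
exact: (closure_F_DA_H_pi hilbert p_proj p_pi_onto).
Qed.
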